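(* Let $t\ge 2$ and let $n$ be an integer with $2^{t-1}-1\le n\le 2^t-3$; put $i=2^t-3-n$ and $j=n-2^{t-1}+1$. Then in $\mathbb{F}_2[w_2,w_3]$: \begin{align*} w_3r_{j-2}q_i+r_{j-1}q_{i+1}&=q_{n-2},\\ r_jq_i+w_3r_{j-1}q_{i-1}&=q_{n-1},\\ r_jq_{i+1}+w_3^2r_{j-2}q_{i-1}&=q_n. \end{align*}
   Context: In $\mathbb{F}_2[w_2,w_3]$: $q_0=1$, $q_m=0$ for $m<0$, $q_m=w_2q_{m-2}+w_3q_{m-3}$ for $m\ge1$; $r_0=1$, $r_m=0$ for $m<0$, $r_{m+1}=w_2r_m+w_3^2r_{m-2}$ for $m\ge0$. *)

From HB Require Import structures.
From mathcomp Require Import all_boot all_algebra.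
From mathcomp Require Import mpoly.
Set Implicit Arguments. Unset Strict Implicit. Unset Printing Implicit Defensive.
Import GRing.Theory.
Local Open Scope ring_scope.

Notation P := {mpoly 'F_2[2]}.
Definition w2 : P := 'X_(@ord0 1).
Definition w3 : P := 'X_(@ord_max 1).

(* q_m for m >= 0: q_0 = 1, q_m = w2 q_{m-2} + w3 q_{m-3} (m >= 1), with
   q_m = 0 for m < 0.  Hence q_1 = 0, q_2 = w2 q_0. *)
Fixpoint qnat (m : nat) : P :=
  match m with
  | 0 => 1
  | 1 => 0
  | 2 => w2 * 1
  | (k.+1 as k1).+2 => w2 * qnat k1 + w3 * qnat k
  end.

(* r_m for m >= 0: r_0 = 1, r_{m+1} = w2 r_m + w3^2 r_{m-2} (m >= 0), with
   r_m = 0 for m < 0.  Hence r_1 = w2 r_0, r_2 = w2 r_1. *)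
Fixpoint rnat (m : nat) : P :=
  match m with
  | 0 => 1
  | 1 => w2 * 1
  | 2 => w2 * (w2 * 1)
  | (k.+2 as k2).+1 => w2 * rnat k2 + w3 ^+ 2 * rnat k
  end.

Definition q (m : int) : P := match m with Posz k => qnat k | Negz _ => 0 end.
Definition r (m : int) : P := match m with Posz k => rnat k | Negz _ => 0 end.

From HB Require Import structures.
From mathcomp Require Import all_boot all_algebra.
From mathcomp Require Import mpoly.
From mathcomp Require Import ring zify.
Import GRing.Theory.
Local Open Scope ring_scope.

(* Writing [i + j = 2^(t-1) - 2 =: N], the three identities hold for [j = 0]
   as soon as [q_(N-1) = 0], and the recurrences for [q] and [r] (plus
   [x + x = 0]) carry them from [(i + 1, j, n)] to [(i, j + 1, n + 1)].  At
   [j = N] the third identity gives [q_(2N+1) = r_N q_1 = 0], i.e.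
   [q_(2^t - 3) = 0], which is the hypothesis needed at the next level [t + 1]. *)

Lemma pchar_P : 2%N \in [pchar P].
Proof. by apply: (rmorph_pchar (@mpolyC 2 'F_2)); apply: pchar_Fp. Qed.

Lemma q_neg (m : int) : m < 0 -> q m = 0.
Proof. by case: m. Qed.

Lemma r_neg (m : int) : m < 0 -> r m = 0.
Proof. by case: m. Qed.

Lemma q_rec (m : int) : 0 <= m -> q (m + 1) = w2 * q (m - 1) + w3 * q (m - 2).
Proof.
case: m => // -[|[|k]] _; try by rewrite /= !mulr0 addr0.
have -> : Posz k.+2 + 1 = Posz k.+3 by lia.
have -> : Posz k.+2 - 1 = Posz k.+1 by lia.
by have -> : Posz k.+2 - 2 = Posz k by lia.
Qed.

Lemma r_rec (m : int) : 0 <= m -> r (m + 1) = w2 * r m + w3 ^+ 2 * r (m - 2).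
Proof.
case: m => // -[|[|k]] _; try by rewrite /= mulr0 addr0.
have -> : Posz k.+2 + 1 = Posz k.+3 by lia.
by have -> : Posz k.+2 - 2 = Posz k by lia.
Qed.

Definition qr_identities (i j n : int) :=
  [/\ w3 * r (j - 2) * q i + r (j - 1) * q (i + 1) = q (n - 2),
      r j * q i + w3 * r (j - 1) * q (i - 1) = q (n - 1)
    & r j * q (i + 1) + w3 ^+ 2 * r (j - 2) * q (i - 1) = q n].

Lemma qr_identities_base (N : int) :
  q (N - 1) = 0 -> qr_identities N 0 (N + 1).
Proof.
move=> qN1; rewrite /qr_identities (r_neg (0 - 1)) // (r_neg (0 - 2)) // addrK.
have -> : N + 1 - 2 = N - 1 by lia.
by rewrite qN1 /= !mulr0 !mul0r !mul1r ?addr0 ?add0r.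
Qed.

Lemma qr_identities_step (i j n : int) : 0 <= i -> 0 <= j -> 0 <= n ->
  qr_identities (i + 1) j n -> qr_identities i (j + 1) (n + 1).
Proof.
move=> i_ge0 j_ge0 n_ge0; rewrite /qr_identities.
have -> : j + 1 - 2 = j - 1 by lia.
have -> : n + 1 - 2 = n - 1 by lia.
rewrite !addrK => -[E1 E2 E3].
have q_i2 : q (i + 1 + 1) = w2 * q i + w3 * q (i - 1).
  by rewrite q_rec ?addrK; [congr (_ + _ * q _); lia | lia].
have q_n1 := q_rec _ n_ge0.
have r_j1 := r_rec _ j_ge0.
split.
- by rewrite addrC -E2.
- by rewrite -E3 r_j1 q_i2; ring.
- rewrite q_n1 -E1 -E2 r_j1 q_i2 -[LHS]addr0.
  by rewrite -(addrr_pchar2 pchar_P (w2 * w3 * r (j - 1) * q i)); ring.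
Qed.

Lemma qr_identities_upto {N : nat} (j : nat) : q (N%:Z - 1) = 0 -> (j <= N)%N ->
  qr_identities (N%:Z - j%:Z) j%:Z (N%:Z + 1 + j%:Z).
Proof.
move=> qN1; elim: j => [|j IH] j_le.
  by rewrite subr0 addr0; exact: qr_identities_base.
have -> : N%:Z - j.+1%:Z = N%:Z - j%:Z - 1 by lia.
have -> : N%:Z + 1 + j.+1%:Z = N%:Z + 1 + j%:Z + 1 by lia.
have -> : j.+1%:Z = j%:Z + 1 by lia.
apply: qr_identities_step; try lia.
by rewrite subrK; apply: IH; lia.
Qed.

Lemma q_pow2_sub3 (s : nat) : (0 < s)%N -> q ((2 ^ s)%:Z - 3) = 0.
Proof.
elim: s => // -[|s] IH _ //.
have pow_ge2 : (2 <= 2 ^ s.+1)%N by rewrite expnS leq_pmulr ?expn_gt0.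
pose N : nat := (2 ^ s.+1 - 2)%N.
have qN1 : q (N%:Z - 1) = 0 by rewrite -IH //; congr q; rewrite /N; lia.
have [_ _ E3] := qr_identities_upto N qN1 (leqnn N).
have -> : (2 ^ s.+2)%:Z - 3 = N%:Z + 1 + N%:Z by rewrite /N expnS; lia.
by rewrite -E3 subrr add0r (q_neg (0 - 1)) // /= !mulr0 addr0.
Qed.

Theorem mainTheorem15 (t : nat) (n : int) :
  (2 <= t)%N ->
  (2 ^ (t - 1))%:Z - 1 <= n -> n <= (2 ^ t)%:Z - 3 ->
  let i := (2 ^ t)%:Z - 3 - n in
  let j := n - (2 ^ (t - 1))%:Z + 1 in
  [/\ w3 * r (j - 2) * q i + r (j - 1) * q (i + 1) = q (n - 2),
      r j * q i + w3 * r (j - 1) * q (i - 1) = q (n - 1)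
    & r j * q (i + 1) + w3 ^+ 2 * r (j - 2) * q (i - 1) = q n].
Proof.
case: t => [|[|s]] // _; rewrite subSS subn0 => n_ge n_le i j.
have pow_ge2 : (2 <= 2 ^ s.+1)%N by rewrite expnS leq_pmulr ?expn_gt0.
pose N : nat := (2 ^ s.+1 - 2)%N.
have qN1 : q (N%:Z - 1) = 0.
  by rewrite -(@q_pow2_sub3 s.+1) //; congr q; rewrite /N; lia.
have [k Ek] : exists k : nat, j = k%:Z by exists `|j|%N; rewrite /j; lia.
have k_le : (k <= N)%N by move: n_le Ek; rewrite /j /N expnS; lia.
have := qr_identities_upto k qN1 k_le.
rewrite -Ek.
have -> : N%:Z - j = i by rewrite /i /j /N (expnS 2 s.+1); lia.
have -> : N%:Z + 1 + j = n by rewrite /j /N; lia.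
exact.
Qed.
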